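(* Let $G$ be a finite graph. Then there exist a positive integer $n$ and a modular sumset labeling $f:V(G)\to\mathscr{P}(\mathbb{Z}_n)$ of $G$. Moreover, there exist a positive integer $n$ and a modular sumset indexer $f:V(G)\to\mathscr{P}(\mathbb{Z}_n)$ of $G$.
   Context: Graphs are simple and finite, without isolated vertices. For a positive integer $n$, $\mathbb{Z}_n$ denotes the set of non-negative integers modulo $n$ and $\mathscr{P}(\mathbb{Z}_n)$ its power set. For $A,B\subseteq\mathbb{Z}_n$ the modular sumset is $A+B=\{x\in\mathbb{Z}_n : x\equiv a+b \pmod n \text{ for some } a\in A,\ b\in B\}$. A modular sumset labeling of $G$ is an injective function $f:V(G)\to\mathscr{P}(\mathbb{Z}_n)$ assigning non-empty subsets to vertices, with induced edge function $f^+:E(G)\to\mathscr{P}(\mathbb{Z}_n)$, $f^+(uv)=f(u)+f(v)$. A modular sumset indexer is a modular sumset labeling $f$ whose induced function $f^+$ is also injective. *)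

From mathcomp Require Import all_boot.
Set Implicit Arguments. Unset Strict Implicit. Unset Printing Implicit Defensive.

Definition simple_graph (V : finType) (e : rel V) : Prop :=
  symmetric e /\ irreflexive e /\ (forall v : V, exists u : V, e v u).

(* Z_n represented as 'I_n = {0,...,n-1}; modular sumset. *)
Definition msumset (n : nat) (A B : {set 'I_n}) : {set 'I_n} :=
  [set x : 'I_n | [exists a in A, exists b in B, (nat_of_ord x == (a + b) %% n)%N]].

Definition modular_sumset_labeling (V : finType) (n : nat) (f : V -> {set 'I_n}) : Prop :=
  injective f /\ (forall v, f v != set0).

Definition modular_sumset_indexer (V : finType) (e : rel V) (n : nat)
    (f : V -> {set 'I_n}) : Prop :=
  modular_sumset_labeling f /\
  (forall u v x y : V, e u v -> e x y ->
     msumset (f u) (f v) = msumset (f x) (f y) ->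
     [set u; v] = [set x; y]).

From mathcomp Require Import all_boot.
From mathcomp Require Import zify.

(* Give the vertices distinct ranks r(v) in 1..|V| and label v by {0, r(v)} in
   Z_n with n = 2|V| + 1.  No sum wraps around modulo n, so the edge uv gets
   {0, r(u), r(v), r(u) + r(v)}; its least nonzero element is min(r(u), r(v))
   and its largest is r(u) + r(v), which recovers the pair {r(u), r(v)}.
   No property of the graph is needed. *)

Definition zero_and (n k : nat) : {set 'I_n.+1} := [set ord0; inord k].

Lemma mem_zero_and n k (x : 'I_n.+1) :
  k <= n -> (x \in zero_and n k) = ((x : nat) \in [:: 0; k]).
Proof. by move=> le_kn; rewrite !inE -!val_eqE /= inordK. Qed.

Lemma zero_and_inj n j k : j <= n -> k <= n -> zero_and n j = zero_and n k -> j = k.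
Proof.
move=> le_jn le_kn eq_jk.
have : (inord k : 'I_n.+1) \in zero_and n j by rewrite eq_jk !inE eqxx orbT.
have : (inord j : 'I_n.+1) \in zero_and n k by rewrite -eq_jk !inE eqxx orbT.
by rewrite !mem_zero_and // !inordK // !inE; lia.
Qed.

Lemma mem_msumset_zero_and n j k (x : 'I_n.+1) : j + k <= n ->
  (x \in msumset (zero_and n j) (zero_and n k)) = ((x : nat) \in [:: 0; j; k; j + k]).
Proof.
move=> le_jkn; have [le_jn le_kn] : j <= n /\ k <= n by lia.
rewrite inE; apply/idP/idP => [/existsP[a /andP[Ja /existsP[b /andP[Kb /eqP->]]]] | x_in].
  move: Ja Kb; rewrite !mem_zero_and // !inE => Ja Kb.
  by rewrite modn_small; lia.
have witness a b : a \in [:: 0; j] -> b \in [:: 0; k] -> (x : nat) = a + b ->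
    [exists a' in zero_and n j, exists b' in zero_and n k, (x : nat) == (a' + b') %% n.+1].
  rewrite !inE => Ja Kb ->; apply/existsP; exists (inord a).
  rewrite mem_zero_and // inordK ?inE ?Ja /=; last by lia.
  apply/existsP; exists (inord b).
  by rewrite mem_zero_and // !inordK ?inE ?Kb ?modn_small //; lia.
rewrite !inE in x_in; case/or4P: x_in => /eqP x_eq;
  [apply: (witness 0 0) | apply: (witness j 0) | apply: (witness 0 k) | apply: (witness j k)];
  rewrite ?inE ?eqxx ?orbT //; lia.
Qed.

Lemma sumset_pair_eq a b c d : 0 < a -> 0 < b -> 0 < c -> 0 < d ->
  {subset [:: a; b; a + b] <= [:: 0; c; d; c + d]} ->
  {subset [:: c; d; c + d] <= [:: 0; a; b; a + b]} ->
  (a = c /\ b = d) \/ (a = d /\ b = c).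
Proof.
move=> a_gt0 b_gt0 c_gt0 d_gt0 sub_ab sub_cd.
have := sub_ab a; have := sub_ab b; have := sub_ab (a + b).
have := sub_cd c; have := sub_cd d; have := sub_cd (c + d).
rewrite !inE !eqxx !orbT; lia.
Qed.

Lemma msumset_zero_and_subset n a b c d : a + b <= n -> c + d <= n ->
  msumset (zero_and n a) (zero_and n b) = msumset (zero_and n c) (zero_and n d) ->
  {subset [:: a; b; a + b] <= [:: 0; c; d; c + d]}.
Proof.
move=> le_abn le_cdn sum_eq t t_in.
have le_tn : t <= n by move: t_in; rewrite !inE; lia.
have : (inord t : 'I_n.+1) \in msumset (zero_and n a) (zero_and n b).
  by rewrite mem_msumset_zero_and // inordK // in_cons t_in orbT.
by rewrite sum_eq mem_msumset_zero_and // inordK.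
Qed.

Lemma msumset_zero_and_inj {n a b c d} :
  0 < a -> 0 < b -> 0 < c -> 0 < d -> a + b <= n -> c + d <= n ->
  msumset (zero_and n a) (zero_and n b) = msumset (zero_and n c) (zero_and n d) ->
  (a = c /\ b = d) \/ (a = d /\ b = c).
Proof.
move=> a_gt0 b_gt0 c_gt0 d_gt0 le_abn le_cdn sum_eq.
apply: sumset_pair_eq => //.
  exact: msumset_zero_and_subset le_abn le_cdn sum_eq.
exact: msumset_zero_and_subset le_cdn le_abn (esym sum_eq).
Qed.

Theorem mainTheorem1 (V : finType) (e : rel V) :
  simple_graph e ->
  (exists (n : nat) (f : V -> {set 'I_n}), 0 < n /\ modular_sumset_labeling f) /\
  (exists (n : nat) (f : V -> {set 'I_n}), 0 < n /\ modular_sumset_indexer e f).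
Proof.
move=> _; pose r (v : V) := (enum_rank v).+1.
have r_gt0 v : 0 < r v by [].
have r_le v : r v <= #|V| by exact: ltn_ord.
have r_inj : injective r by move=> u v [] /val_inj /enum_rank_inj.
pose f v := zero_and (#|V|).*2 (r v).
have lab : modular_sumset_labeling f.
  split=> [u v /zero_and_inj f_eq | v]; last by apply/set0Pn; exists ord0; rewrite !inE eqxx.
  by apply/r_inj/f_eq; [have := r_le u | have := r_le v]; lia.
split; exists (#|V|).*2.+1, f; split=> //; split=> // u v x y _ _ sum_eq.
have r_sum_le u' v' : r u' + r v' <= (#|V|).*2 by have := r_le u'; have := r_le v'; lia.
have [[/r_inj-> /r_inj->] | [/r_inj-> /r_inj->]] // :=
  msumset_zero_and_inj (r_gt0 u) (r_gt0 v) (r_gt0 x) (r_gt0 y)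
    (r_sum_le u v) (r_sum_le x y) sum_eq.
by rewrite setUC.
Qed.
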